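(* Let $t\ge0$ be an integer such that $q=4t+5$ is a prime power, let $s=t+1$, let $F_q$ be the field with $q$ elements, $C$ its set of nonzero squares, $V=F_q\times F_q$ and $X=\mathbb{P}(V)$ the projective line (of cardinality $q+1$). For a basis $(u,v)$ of $V$ let $\Gamma^u_v$ be the graph on $X^u=X\setminus\{\langle u\rangle\}$ in which $\langle \alpha u+v\rangle$ and $\langle\beta u+v\rangle$ ($\alpha,\beta\in F_q$) are adjacent iff $\alpha-\beta\in C$. Then for every basis $(u,v)$: 1. $\Gamma^u_v$ has diameter $2$, every vertex has exactly $(q-1)/2=2s$ neighbours, two adjacent vertices have exactly $t=s-1$ common neighbours, and two vertices at distance $2$ have exactly $s$ common neighbours. 2. Let $\widehat\Gamma$ be the graph on $X$ obtained from $\Gamma^u_v$ by adding $\langle u\rangle$ as an isolated vertex. Then the localized graph ${}^{\langle v\rangle}\widehat\Gamma$ has $\langle v\rangle$ isolated and induces $\Gamma^v_u$ on $X\setminus\{\langle v\rangle\}$. 3. (a) For every $\varphi\in GL_2(F_q)$ (acting on $X$ by $\langle w\rangle\mapsto\langle\varphi(w)\rangle$), $\varphi(\Gamma^u_v)=\Gamma^{\varphi(u)}_{\varphi(v)}$. (b) If moreover $\varphi$ stabilizes the line $\langle u\rangle$, then $\Gamma^{\varphi(u)}_{\varphi(v)}=\Gamma^u_v$ if $\det\varphi$ is a square in $F_q$, and otherwise $\Gamma^{\varphi(u)}_{\varphi(v)}$ is the complementary graph of $\Gamma^u_v$ on $X^u$. 4. The group $SL_2(F_q)$ has exactly two orbits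 on the set of graphs $\Gamma^{u'}_{v'}$ ($(u',v')$ ranging over the bases of $V$). The orbit of $\Gamma^u_v$ is the set of graphs obtained by localizing $\widehat\Gamma$ (as in 2) at a point $z\in X$ and deleting the isolated vertex $z$, for $z$ ranging over $X$.
   Context: For a simple graph $\Gamma$ on a finite set $X$, its matrix $\mathcal{E}=(\varepsilon_{i,j})$ has $\varepsilon_{i,j}=-1$ if $i\ne j$ are adjacent, $1$ otherwise. Two graphs on $X$ with matrices $\mathcal{E},\mathcal{E}'$ are associated if there are $\nu_i\in\{\pm1\}$ with $\varepsilon'_{i,j}=\nu_i\nu_j\varepsilon_{i,j}$ for all $i,j$. The localization ${}^z\Gamma$ of $\Gamma$ at $z\in X$ is the unique graph associated to $\Gamma$ in which $z$ is an isolated vertex. The complementary graph has the same vertices, its edges being the non-edges of the original graph. *)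

From HB Require Import structures.
From mathcomp Require Import all_boot all_order all_algebra.
Set Implicit Arguments. Unset Strict Implicit. Unset Printing Implicit Defensive.
Import GRing.Theory.
Local Open Scope ring_scope.

Section Graphs.
Variable T : finType.

(* A graph is a pair (vertex set, edge set); edges are 2-element sets {x,y}. *)
Definition graph := ({set T} * {set {set T}})%type.

Definition edge (G : graph) (x y : T) : bool := [set x; y] \in G.2.

Definition nbr (G : graph) (x : T) : {set T} := [set y in G.1 | edge G x y].

Definition dist_le (G : graph) (x y : T) (n : nat) : Prop :=
  exists p : seq T, [/\ path (edge G) x p, last x p = y & (size p <= n)%N].

Definition is_dist (G : graph) (x y : T) (n : nat) : Prop :=
  dist_le G x y n /\ forall m, (m < n)%N -> ~ dist_le G x y m.

Definition diameter (G : graph) (d : nat) : Prop :=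
  (forall x y, x \in G.1 -> y \in G.1 -> exists2 n, (n <= d)%N & is_dist G x y n)
  /\ exists x y, [/\ x \in G.1, y \in G.1 & is_dist G x y d].

Definition isolated (G : graph) (z : T) : Prop := forall y, ~~ edge G z y.

Definition induced (G : graph) (W : {set T}) : graph :=
  (W, [set e in G.2 | e \subset W]).

Definition complement (G : graph) : graph :=
  (G.1, [set [set x; y] | x in G.1, y in G.1 & (x != y) && ~~ edge G x y]).

Definition eps (G : graph) (i j : T) : int := if edge G i j then -1 else 1.

Definition associated (G H : graph) : Prop :=
  H.1 = G.1 /\ exists nu : T -> int, (forall i, nu i = 1 \/ nu i = -1) /\
    forall i j, i \in G.1 -> j \in G.1 -> eps H i j = nu i * nu j * eps G i j.

(* localization at z: the graph associated to G (signs nu_i = eps z i,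
   nu_z = 1) in which z is isolated *)
Definition loc (G : graph) (z : T) : graph :=
  (G.1, [set [set i; j] | i in G.1, j in G.1 &
          (i != j) && (eps G z i * eps G z j * eps G i j == -1)]).

End Graphs.

Section Projective.
Variable F : finFieldType.

(* the point <w> of P(V), V = F^2 (row vectors), seen as the set of vectors of the line *)
Definition line (w : 'rV[F]_2) : {set 'rV[F]_2} := [set k *: w | k : F].

Definition projline : {set {set 'rV[F]_2}} :=
  [set line w | w in [set w : 'rV[F]_2 | w != 0]].

Definition nzsq (c : F) : bool := (c != 0) && [exists g : F, c == g ^+ 2].

Definition is_basis (u v : 'rV[F]_2) : bool := row_free (col_mx u v).

Definition gadj (u v : 'rV[F]_2) (x y : {set 'rV[F]_2}) : bool :=
  [exists a : F, exists b : F,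
     [&& x == line (a *: u + v), y == line (b *: u + v) & nzsq (a - b)]].

Definition Gamma (u v : 'rV[F]_2) : graph {set 'rV[F]_2} :=
  (projline :\ line u,
   [set [set x; y] | x in projline :\ line u, y in projline :\ line u &
                     (x != y) && gadj u v x y]).

Definition Ghat (u v : 'rV[F]_2) : graph {set 'rV[F]_2} :=
  (projline, (Gamma u v).2).

Definition actA (A : 'M[F]_2) (S : {set 'rV[F]_2}) : {set 'rV[F]_2} :=
  [set x *m A | x in S].

Definition gimage (A : 'M[F]_2) (G : graph {set 'rV[F]_2}) : graph {set 'rV[F]_2} :=
  (actA A @: G.1, imset (fun e : {set {set 'rV[F]_2}} => actA A @: e) (mem G.2)).

Definition bases : {set 'rV[F]_2 * 'rV[F]_2} :=
  [set p : 'rV[F]_2 * 'rV[F]_2 | is_basis p.1 p.2].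

Definition Gammas : {set graph {set 'rV[F]_2}} := [set Gamma p.1 p.2 | p in bases].

Definition SL2 : {set 'M[F]_2} := [set A : 'M[F]_2 | \det A == 1].

Definition orbitSL (G : graph {set 'rV[F]_2}) : {set graph {set 'rV[F]_2}} :=
  [set gimage A G | A in SL2].

End Projective.

(* Through the chart a |-> <a u + v>, X^u is a copy of F_q and Gamma^u_v is the Paley graph
   of F_q; as q = 1 mod 4, -1 is a square and adjacency is symmetric. Its parameters follow from
   Euler's criterion and the Jacobsthal sum  \sum_c chi(c) chi(c - d) = -1  (d != 0) of the
   quadratic character chi.
   If p' = la p and q' = mu p + nu q, the charts of (p, q) and (p', q') differ by the affine map
   a |-> (la a + mu) / nu, which multiplies differences by la / nu. Hence Gamma^p_q depends only
   on <p> and on the square class of det(p, q), and turns into its complement when that class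
   changes; as SL_2 preserves det and is transitive on the bases of given determinant, this gives
   3 and the two orbits of 4.
   In the chart of (v, u) one has <a v + u> = <a^-1 u + v>, and localizing at <v> multiplies the
   sign of {<a v + u>, <b v + u>} by chi(a) chi(b), which turns chi(a^-1 - b^-1) into chi(b - a):
   this is 2. Applied at every point z of X, together with the previous invariance, it identifies
   the localizations of Gamma-hat with the orbit of Gamma^u_v. *)

From HB Require Import structures.
From mathcomp Require Import all_boot all_order all_algebra finfield.
From mathcomp Require Import ring zify.
Set Implicit Arguments. Unset Strict Implicit. Unset Printing Implicit Defensive.
Import GRing.Theory.
Local Open Scope ring_scope.

Lemma sumr_indicator (T : finType) (P : pred T) :
  \sum_(x : T) ((P x)%:R : int) = #|[set x | P x]|%:R.
Proof. by rewrite -sum1dep_card natr_sum [RHS]big_mkcond; apply: eq_bigr => x _; case: (P x). Qed.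

Section QuadraticCharacter.
Variables (F : finFieldType) (m : nat).
Hypothesis card_F : #|F| = m.*2.+1.
Implicit Types x y c d g : F.

Lemma nzsq_neq0 x : nzsq x -> x != 0.
Proof. by case/andP. Qed.

Lemma nzsq0 : nzsq (0 : F) = false.
Proof. by rewrite /nzsq eqxx. Qed.

Lemma nzsq_sqr g : g != 0 -> nzsq (g ^+ 2).
Proof. by move=> g0; rewrite /nzsq expf_neq0 //; apply/existsP; exists g. Qed.

Lemma nzsq1 : nzsq (1 : F).
Proof. by rewrite -(expr1n _ 2) nzsq_sqr ?oner_eq0. Qed.

Lemma half_card_gt0 : (0 < m)%N.
Proof. by have := finNzRing_gt1 F; rewrite card_F; case: m. Qed.

Lemma expf_card_pred x : x != 0 -> x ^+ m.*2 = 1.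
Proof. by move=> x0; apply: (mulIf x0); rewrite mul1r -exprSr -card_F expf_card. Qed.

(* Squaring maps the nonzero elements onto the nonzero squares, with fibres {g, - g}. *)
Lemma card_nzsq_ge : (m <= #|[set x : F | nzsq x]|)%N.
Proof.
rewrite -(leq_pmul2l (ltn0Sn 1)) mul2n.
have -> : m.*2 = #|predC1 (0 : F)| by rewrite cardC1 card_F.
rewrite -[#|predC1 _|]sum1_card (partition_big_imset (fun g : F => g ^+ 2)) /=.
rewrite mulnC -sum_nat_const.
have -> : [set g ^+ 2 | g in predC1 (0 : F)] = [set x : F | nzsq x].
  apply/setP => x; rewrite inE; apply/imsetP/idP => [[g g0 ->]|].
    exact: nzsq_sqr.
  case/andP=> x0 /existsP[g /eqP xg]; exists g => //=.
  by apply: contraNneq x0 => g0; rewrite xg g0 expr0n.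
apply: leq_sum => y; rewrite inE => /andP[_ /existsP[g /eqP ->]]; rewrite sum1dep_card.
apply: leq_trans (_ : #|[set g; - g]| <= 2)%N; last by rewrite cards2; case: (g != - g).
by apply/subset_leq_card/subsetP => h; rewrite !inE eqf_sqr => /andP[].
Qed.

Lemma card_expf_eq1_le : (#|[set x : F | x ^+ m == 1%R]| <= m)%N.
Proof.
rewrite cardE -ltnS -(size_XnsubC (1 : F) half_card_gt0).
apply: max_poly_roots; last exact: enum_uniq.
  by rewrite -size_poly_eq0 (size_XnsubC _ half_card_gt0).
by apply/allP => y; rewrite mem_enum inE /root !hornerE => /eqP ->; rewrite subrr.
Qed.

Lemma nzsq_subset_expf_eq1 : [set x : F | nzsq x] \subset [set x : F | x ^+ m == 1].
Proof.
apply/subsetP => x; rewrite !inE => /andP[x0 /existsP[g /eqP xg]].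
have g0 : g != 0 by apply: contraNneq x0 => g0; rewrite xg g0 expr0n.
by rewrite xg -exprM mul2n expf_card_pred.
Qed.

Lemma card_nzsq : #|[set x : F | nzsq x]| = m.
Proof.
apply/eqP; rewrite eqn_leq card_nzsq_ge andbT.
exact: leq_trans (subset_leq_card nzsq_subset_expf_eq1) card_expf_eq1_le.
Qed.

Lemma nzsqE x : nzsq x = (x ^+ m == 1).
Proof.
have eq_card : #|[set x : F | nzsq x]| = #|[set x : F | x ^+ m == 1]|.
  by apply/eqP; rewrite eqn_leq subset_leq_card ?nzsq_subset_expf_eq1 // card_nzsq card_expf_eq1_le.
by have := subset_cardP eq_card nzsq_subset_expf_eq1 x; rewrite !inE.
Qed.

Lemma nzsqN1 : ~~ odd m -> nzsq (-1 : F).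
Proof. by move=> m_even; rewrite nzsqE -signr_odd (negPf m_even). Qed.

Lemma exists_nonsq : exists2 d : F, d != 0 & ~~ nzsq d.
Proof.
apply/exists_inP; rewrite -negb_forall_in; apply/negP => /forall_inP all_sq.
have : (#|predC1 (0%R : F)| <= #|[set x : F | nzsq x]|)%N.
  by apply/subset_leq_card/subsetP => x; rewrite inE => /all_sq.
by rewrite cardC1 card_F card_nzsq -addnn; have := half_card_gt0; lia.
Qed.

Definition qchar (x : F) : int := if x == 0 then 0 else if nzsq x then 1 else -1.

Lemma qchar0 : qchar 0 = 0.
Proof. by rewrite /qchar eqxx. Qed.

Lemma qchar_nzsq x : nzsq x -> qchar x = 1.
Proof. by move=> sq_x; rewrite /qchar sq_x (negPf (nzsq_neq0 sq_x)). Qed.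

Lemma qchar_nonsq x : x != 0 -> ~~ nzsq x -> qchar x = -1.
Proof. by move=> x0 nsq_x; rewrite /qchar (negPf nsq_x) (negPf x0). Qed.

Lemma qchar_eq1 x : (qchar x == 1) = nzsq x.
Proof. by rewrite /qchar; have [->|x0] := eqVneq x 0; [rewrite nzsq0 | case: (nzsq x)]. Qed.

Lemma qcharM x y : qchar (x * y) = qchar x * qchar y.
Proof.
have [->|x0] := eqVneq x 0; first by rewrite mul0r qchar0 mul0r.
have [->|y0] := eqVneq y 0; first by rewrite mulr0 qchar0 mulr0.
have sign (z : F) : z != 0 -> (z ^+ m = 1) \/ (z ^+ m = -1).
  move=> z0; have /eqP : (z ^+ m) ^+ 2 = 1 by rewrite -exprM muln2 expf_card_pred.
  by rewrite sqrf_eq1 => /orP[] /eqP; [left | right].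
rewrite /qchar !nzsqE (negPf x0) (negPf y0) mulf_eq0 (negPf x0) (negPf y0) exprMn.
have N1_neq1 : (-1 : F) != 1.
  apply/negP => /eqP N1_eq1; have [d d0 /negP] := exists_nonsq; apply.
  by rewrite nzsqE; case: (sign d d0) => ->; rewrite ?N1_eq1.
by case: (sign x x0) => ->; case: (sign y y0) => ->;
   rewrite /= ?mul1r ?mulr1 ?mulrNN ?mulr1 ?eqxx ?(negPf N1_neq1).
Qed.

Lemma qchar_sign x : x != 0 -> qchar x = 1 \/ qchar x = -1.
Proof. by move=> x0; rewrite /qchar (negPf x0); case: (nzsq x); [left | right]. Qed.

Lemma qchar_sqr g : g != 0 -> qchar (g ^+ 2) = 1.
Proof. by move/nzsq_sqr/qchar_nzsq. Qed.

Lemma qcharV x : qchar x^-1 = qchar x.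
Proof.
have [->|x0] := eqVneq x 0; first by rewrite invr0.
have -> : x^-1 = x * x^-1 ^+ 2 by rewrite expr2 mulrA mulfV // mul1r.
by rewrite qcharM qchar_sqr ?invr_neq0 // mulr1.
Qed.

Lemma nzsqM x c : x != 0 -> c != 0 -> nzsq (x * c) = (nzsq x == nzsq c).
Proof.
move=> x0 c0; rewrite -!qchar_eq1 qcharM.
by case: (qchar_sign x0) => ->; case: (qchar_sign c0) => ->.
Qed.

Lemma nzsqV x : nzsq x^-1 = nzsq x.
Proof. by rewrite -!qchar_eq1 qcharV. Qed.

Lemma nzsq_qchar x : ((nzsq x)%:R *+ 2 : int) = (x != 0 :> F)%:R + qchar x.
Proof. by rewrite /qchar; have [->|x0] := eqVneq x 0; [rewrite nzsq0 | case: (nzsq x)]. Qed.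

Lemma sum_qchar : \sum_x qchar x = 0.
Proof.
have e x : qchar x = (nzsq x)%:R *+ 2 - (x != 0)%:R.
  by rewrite nzsq_qchar [_ + qchar x]addrC addrK.
under eq_bigr do rewrite e.
rewrite sumrB sumrMnl !sumr_indicator card_nzsq.
have -> : #|[set x : F | x != 0]| = m.*2 by rewrite cardsE cardC1 card_F.
by rewrite -mul2n natrM mulr_natl subrr.
Qed.

Lemma sum_qchar_shift d : \sum_x qchar (x - d) = 0.
Proof. by rewrite (reindex_inj (addIr d)); under eq_bigr do rewrite addrK; exact: sum_qchar. Qed.

Lemma sumr_delta (a : F) : \sum_x ((x == a)%:R : int) = 1.
Proof. by rewrite (bigD1 a) //= eqxx big1 ?addr0 // => x /negPf ->. Qed.

(* c (c - d) = c ^+ 2 (1 - d / c), and c |-> 1 - d / c permutes F, sending 0 to 1. *)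
Lemma sum_qcharM_shift d : d != 0 -> \sum_c qchar c * qchar (c - d) = -1.
Proof.
move=> d0; pose h c := 1 - d * c^-1.
have h_inj : injective h.
  by move=> x y /addrI /oppr_inj /(mulfI d0) /invr_inj.
have e c : qchar c * qchar (c - d) = qchar (h c) - (c == 0)%:R.
  have [->|c0] := eqVneq c 0.
    by rewrite qchar0 mul0r /h invr0 mulr0 subr0 qchar_nzsq ?nzsq1 ?subrr.
  have -> : c - d = c * h c by rewrite /h mulrBr mulr1 mulrCA mulfV ?mulr1.
  by rewrite qcharM mulrA -qcharM -expr2 qchar_sqr // mul1r subr0.
under eq_bigr do rewrite e.
rewrite sumrB; have -> : \sum_c qchar (h c) = \sum_c qchar c by rewrite [RHS](reindex_inj h_inj).
by rewrite sum_qchar sumr_delta sub0r.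
Qed.

Lemma card_nzsq_pair d : d != 0 ->
  (#|[set c : F | nzsq c && nzsq (c - d)]|%:R *+ 4 : int) =
    (m.*2)%:R - 2 - qchar d - qchar (- d).
Proof.
move=> d0.
have e c : ((nzsq c && nzsq (c - d))%:R *+ 4 : int) =
    1 - (c == 0)%:R - (c == d)%:R + (qchar (c - d) - (c == 0)%:R * qchar (- d))
    + (qchar c - (c == d)%:R * qchar d) + qchar c * qchar (c - d).
  have -> : ((nzsq c && nzsq (c - d))%:R *+ 4 : int) =
      ((nzsq c)%:R *+ 2) * ((nzsq (c - d))%:R *+ 2).
    by case: (nzsq c); case: (nzsq (c - d)).
  rewrite !nzsq_qchar subr_eq0; have [->|c0] := eqVneq c 0.
    by rewrite (eq_sym 0) (negPf d0) sub0r qchar0 /=; ring.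
  have [->|cd] := eqVneq c d; first by rewrite subrr qchar0 /=; ring.
  by rewrite /=; ring.
rewrite -sumr_indicator -sumrMnl; under eq_bigr do rewrite e.
rewrite !(sumrB, big_split) /= -!mulr_suml sum_qchar sum_qchar_shift sum_qcharM_shift //.
rewrite !sumr_delta !mul1r sumr_const card_F; lia.
Qed.

End QuadraticCharacter.

Section Graphs.
Variable T : finType.
Implicit Types (V W : {set T}) (r : rel T) (G : graph T) (x y z : T).

Definition rel_graph V r : graph T :=
  (V, [set [set x; y] | x in V, y in V & (x != y) && r x y]).

Lemma complementE G : complement G = rel_graph G.1 (fun x y => ~~ edge G x y).
Proof. by []. Qed.

Lemma locE G z :
  loc G z = rel_graph G.1 (fun x y => eps G z x * eps G z y * eps G x y == -1).
Proof. by []. Qed.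

Lemma edgeC G x y : edge G x y = edge G y x.
Proof. by rewrite /edge setUC. Qed.

Lemma eq_set2 x y x' y' : x' != y' -> [set x; y] = [set x'; y'] ->
  (x = x' /\ y = y') \/ (x = y' /\ y = x').
Proof.
move=> x'y' e; have : x' \in [set x; y] by rewrite e set21.
have : y' \in [set x; y] by rewrite e set22.
by move=> /set2P[] ey /set2P[] ex; subst; by [left | right | rewrite eqxx in x'y'].
Qed.

Lemma edge_rel_graph V r x y :
  edge (rel_graph V r) x y = [&& x \in V, y \in V, x != y & r x y || r y x].
Proof.
apply/imset2P/and4P => [[x' y' x'V]|[xV yV xy /orP[rxy|ryx]]].
- rewrite inE => /andP[y'V /andP[x'y' r']] /(eq_set2 x'y') [[-> ->]|[-> ->]].
    by rewrite r'.
  by rewrite eq_sym r' orbT.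
- by exists x y; rewrite // inE yV xy.
- by exists y x; rewrite ?inE ?xV 1?eq_sym ?xy // setUC.
Qed.

Lemma eq_rel_graph V r r' :
  {in V &, forall x y, x != y -> r x y = r' x y} -> rel_graph V r = rel_graph V r'.
Proof.
move=> rr'; congr pair; apply/setP => e.
apply/imset2P/imset2P => -[x y xV]; rewrite !inE => /andP[yV /andP[xy rxy]] ->;
  exists x y; rewrite // inE yV xy /=.
  by rewrite -rr'.
by rewrite rr'.
Qed.

Lemma induced_rel_graph V W r : W \subset V -> induced (rel_graph V r) W = rel_graph W r.
Proof.
move=> WV; congr pair; apply/setP => e; rewrite inE; apply/andP/imset2P.
  case=> /imset2P[x y _]; rewrite inE => /andP[_ xyr] -> /subsetP xyW.
  by exists x y; rewrite ?inE ?xyr ?andbT ?xyW ?set21 ?set22.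
case=> x y xW; rewrite inE => /andP[yW xyr] ->; split.
  by apply/imset2P; exists x y; rewrite ?inE ?xyr ?andbT ?(subsetP WV).
by apply/subsetP => z /set2P[] ->.
Qed.

Lemma imset_rel_graph (f : T -> T) V r r' : injective f ->
    {in V &, forall x y, r' (f x) (f y) = r x y} ->
  (f @: V, [set f @: e | e : {set T} in (rel_graph V r).2]) = rel_graph (f @: V) r'.
Proof.
move=> f_inj rr'; congr pair; apply/setP => e; apply/imsetP/imset2P.
  case=> e' /imset2P[x y xV]; rewrite inE => /andP[yV /andP[xy rxy]] -> ->.
  exists (f x) (f y); rewrite ?imset_f ?imsetU1 ?imset_set1 // inE imset_f //.
  by rewrite (inj_eq f_inj) xy rr'.
case=> fx fy /imsetP[x xV ->]; rewrite inE => /andP[/imsetP[y yV ->]].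
rewrite (inj_eq f_inj) rr' // => xyr ->.
by exists [set x; y]; rewrite ?imsetU1 ?imset_set1 //; apply/imset2P; exists x y; rewrite ?inE ?yV.
Qed.

Lemma loc_isolated G z : ~~ edge G z z -> isolated (loc G z) z.
Proof.
move=> nzz y; rewrite locE edge_rel_graph /eps (negPf nzz) mul1r.
by rewrite [edge G y z]edgeC; case: (edge G z y); rewrite ?andbF.
Qed.

Lemma dist_le0 G x y : dist_le G x y 0 -> x = y.
Proof. by case=> -[|z p] []. Qed.

Lemma dist_le1 G x y n : (n <= 1)%N -> dist_le G x y n -> x = y \/ edge G x y.
Proof.
move=> n_le1 [[|z [|w p]]] /= [walk <- size_le]; first by left.
  by right; rewrite andbT in walk.
by have := leq_trans size_le n_le1.
Qed.

Lemma is_dist0 G x : is_dist G x x 0.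
Proof. by split; first exists [::]. Qed.

Lemma is_dist1 G x y : x != y -> edge G x y -> is_dist G x y 1.
Proof.
move=> xy exy; split; first by exists [:: y]; rewrite /= exy.
by case=> // _ /dist_le0 /eqP; apply/negP.
Qed.

Lemma is_dist2 G x y z : x != y -> ~~ edge G x y -> edge G x z -> edge G z y ->
  is_dist G x y 2.
Proof.
move=> xy nexy exz ezy; split; first by exists [:: z; y]; rewrite /= exz ezy.
move=> n n_lt2 /(dist_le1 n_lt2) [x_eq_y | exy].
  by rewrite x_eq_y eqxx in xy.
by rewrite exy in nexy.
Qed.

Lemma is_dist2_nonadj G x y : is_dist G x y 2 -> x != y /\ ~~ edge G x y.
Proof.
case=> _ not_le1; split; apply/negP.
  by move/eqP => xy; apply: (not_le1 0%N) => //; exists [::]; rewrite xy.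
by move=> exy; apply: (not_le1 1%N) => //; exists [:: y]; rewrite /= exy.
Qed.

Lemma diameter2 G :
    (forall x y, x \in G.1 -> y \in G.1 -> x != y -> ~~ edge G x y ->
       exists z, edge G x z && edge G z y) ->
    (exists x y, [/\ x \in G.1, y \in G.1, x != y & ~~ edge G x y]) ->
  diameter G 2.
Proof.
move=> common [x0 [y0 [x0G y0G x0y0 nex0y0]]]; split; last first.
  have [z /andP[ex0z ezy0]] := common _ _ x0G y0G x0y0 nex0y0.
  by exists x0, y0; split=> //; apply: is_dist2 ex0z ezy0.
move=> x y xG yG; have [<-|xy] := eqVneq x y; first by exists 0%N; last exact: is_dist0.
have [exy|nexy] := boolP (edge G x y); first by exists 1%N; last exact: is_dist1.
have [z /andP[exz ezy]] := common _ _ xG yG xy nexy.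
by exists 2%N; last exact: is_dist2 exz ezy.
Qed.

End Graphs.

Section ProjectiveLine.
Variable F : finFieldType.
Implicit Types (p q w z : 'rV[F]_2) (a b k : F) (x : {set 'rV[F]_2}).

Definition cross p q : F := p 0 0 * q 0 1 - p 0 1 * q 0 0.

Lemma det_col_mx2 p q : \det (col_mx p q) = cross p q.
Proof.
have row0 j : col_mx p q 0 j = p 0 j.
  by rewrite -(col_mxEu p q 0 j); congr (col_mx p q _ j); apply/val_inj.
have row1 j : col_mx p q 1 j = q 0 j.
  by rewrite -(col_mxEd p q 0 j); congr (col_mx p q _ j); apply/val_inj.
move: (col_mx p q) row0 row1 => M row0 row1.
rewrite (expand_det_row _ 0) !big_ord_recl big_ord0 /cofactor !det_mx11 /row' /col' !mxE.
have -> : lift 0 (0 : 'I_1) = 1 :> 'I_2 by apply/val_inj.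
have -> : lift 1 (0 : 'I_1) = 0 :> 'I_2 by apply/val_inj.
rewrite !row0 !row1 /cross /= expr0 expr1; ring.
Qed.

Lemma is_basisE p q : is_basis p q = (cross p q != 0).
Proof. by rewrite /is_basis row_free_unit unitmxE unitfE det_col_mx2. Qed.

Lemma crossM p q (A : 'M[F]_2) : cross (p *m A) (q *m A) = cross p q * \det A.
Proof. by rewrite -!det_col_mx2 -det_mulmx mul_col_mx. Qed.

Lemma crossC p q : cross q p = - cross p q.
Proof. by rewrite /cross; ring. Qed.

Lemma crossZl k p q : cross (k *: p) q = k * cross p q.
Proof. by rewrite /cross !mxE; ring. Qed.

Lemma crossZr k p q : cross p (k *: q) = k * cross p q.
Proof. by rewrite /cross !mxE; ring. Qed.

Lemma cross_addZr a p q : cross p (a *: p + q) = cross p q.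
Proof. by rewrite /cross !mxE; ring. Qed.

Lemma cross_affine a b p q : cross (a *: p + q) (b *: p + q) = (a - b) * cross p q.
Proof. by rewrite /cross !mxE; ring. Qed.

Lemma cross_comb a b c d p q :
  cross (a *: p + b *: q) (c *: p + d *: q) = (a * d - b * c) * cross p q.
Proof. by rewrite /cross !mxE; ring. Qed.

Lemma cross0r p : cross p 0 = 0.
Proof. by rewrite /cross !mxE; ring. Qed.

(* Cramer's rule in the basis (p, q). *)
Lemma cross_decomp p q w : cross p q != 0 ->
  w = (cross w q / cross p q) *: p + (cross p w / cross p q) *: q.
Proof.
move=> pq0; apply/rowP => j; rewrite !mxE.
have [-> | ->] : j = 0 \/ j = 1 by case: j => -[|[|//]] ?; [left | right]; apply/val_inj.
all: by move: pq0; rewrite /cross => pq0; field.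
Qed.

Lemma lineP w z : reflect (exists k, z = k *: w) (z \in line w).
Proof. by apply: (iffP imsetP) => [[k _ ->]|[k ->]]; exists k. Qed.

Lemma line_id w : w \in line w.
Proof. by apply/lineP; exists 1; rewrite scale1r. Qed.

Lemma lineZ k w : k != 0 -> line (k *: w) = line w.
Proof.
move=> k0; apply/setP => z; apply/lineP/lineP => -[c ->].
  by exists (c * k); rewrite scalerA.
by exists (c / k); rewrite scalerA divfK.
Qed.

Lemma line_swap p q a : a != 0 -> line (a *: q + p) = line (a^-1 *: p + q).
Proof.
move=> a0; rewrite -(lineZ (a *: q + p) (invr_neq0 a0)); congr line.
by rewrite scalerDr scalerA mulVf // scale1r addrC.
Qed.

Lemma cross_line w z : z \in line w -> cross w z = 0.
Proof. by case/lineP => k ->; rewrite crossZr /cross; ring. Qed.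

Lemma eq_line_scale p w : w != 0 -> line p = line w -> exists2 k, k != 0 & w = k *: p.
Proof.
move=> w0 pw; have /lineP[k wk] : w \in line p by rewrite pw line_id.
by exists k => //; apply: contraNneq w0 => k0; rewrite wk k0 scale0r.
Qed.

Lemma projlineP x : reflect (exists2 w, w != 0 & x = line w) (x \in projline F).
Proof. by apply: (iffP imsetP) => -[w]; rewrite ?inE => w0 ->; exists w; rewrite ?inE. Qed.

Lemma line_projline w : w != 0 -> line w \in projline F.
Proof. by move=> w0; apply/projlineP; exists w. Qed.

Lemma actA_line (A : 'M[F]_2) w : actA A (line w) = line (w *m A).
Proof.
apply/setP => z; apply/imsetP/lineP => [[y /lineP[k ->] ->]|[k ->]].
  by exists k; rewrite scalemxAl.
by exists (k *: w); [apply/lineP; exists k | rewrite scalemxAl].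
Qed.

Lemma actA_inj (A : 'M[F]_2) : A \in unitmx -> injective (actA A).
Proof. by move=> uA; apply: imset_inj; apply: row_free_inj; rewrite row_free_unit. Qed.

End ProjectiveLine.

Section AffineChart.
Variables (F : finFieldType) (p q : 'rV[F]_2).
Hypothesis pq : cross p q != 0.
Local Notation pt a := (line (a *: p + q)).
Local Notation Xp := (projline F :\ line p).

Lemma basis_neq0l : p != 0.
Proof. by apply: contraNneq pq => ->; rewrite crossC cross0r oppr0. Qed.

Lemma line_projline_l : line p \in projline F.
Proof. exact: line_projline basis_neq0l. Qed.

Lemma pt_in a : pt a \in Xp.
Proof.
have pt0 : a *: p + q != 0 by apply: contraNneq pq => e; rewrite -(cross_addZr a) e cross0r.
rewrite !inE line_projline // andbT; apply/eqP => e.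
have /cross_line/eqP : a *: p + q \in line p by rewrite -e line_id.
by rewrite cross_addZr (negPf pq).
Qed.

Lemma pt_inj : injective (fun a => pt a).
Proof.
move=> a b e; have /cross_line/eqP : b *: p + q \in pt a by rewrite e line_id.
by rewrite cross_affine mulf_eq0 (negPf pq) orbF subr_eq0 => /eqP.
Qed.

Lemma ptP x : x \in Xp -> exists a, x = pt a.
Proof.
rewrite !inE => /andP[xp /projlineP[w w0 xw]]; rewrite xw in xp *.
set al := cross w q / cross p q; set be := cross p w / cross p q.
have w_eq : w = al *: p + be *: q := cross_decomp w pq.
have [be0 | be0] := eqVneq be 0.
  have al0 : al != 0 by apply: contraNneq w0 => al0; rewrite w_eq al0 be0 !scale0r addr0.
  by rewrite w_eq be0 scale0r addr0 lineZ ?eqxx in xp.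
exists (al / be); rewrite -(lineZ w (invr_neq0 be0)) w_eq scalerDr !scalerA mulVf //.
by rewrite scale1r mulrC.
Qed.

Lemma projlineD1E : Xp = [set pt a | a : F].
Proof.
apply/setP => x; apply/idP/imsetP => [/ptP[a ->] | [a _ ->]]; last exact: pt_in.
by exists a.
Qed.

Lemma gadj_pt a b : gadj p q (pt a) (pt b) = nzsq (a - b).
Proof.
apply/existsP/idP => [[a' /existsP[b' /and3P[/eqP/pt_inj <- /eqP/pt_inj <- //]]] | sq_ab].
by exists a; apply/existsP; exists b; rewrite !eqxx sq_ab.
Qed.

End AffineChart.

Lemma GammaE (F : finFieldType) (p q : 'rV[F]_2) :
  Gamma p q = rel_graph (projline F :\ line p) (gadj p q).
Proof. by []. Qed.

Lemma edge_Ghat (F : finFieldType) (p q : 'rV[F]_2) : edge (Ghat p q) = edge (Gamma p q).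
Proof. by []. Qed.

Lemma eps_Ghat (F : finFieldType) (p q : 'rV[F]_2) : eps (Ghat p q) = eps (Gamma p q).
Proof. by []. Qed.

Lemma gimage_Gamma (F : finFieldType) (p q : 'rV[F]_2) (A : 'M[F]_2) :
  cross p q != 0 -> A \in unitmx -> gimage A (Gamma p q) = Gamma (p *m A) (q *m A).
Proof.
move=> pq uA; have pqA : cross (p *m A) (q *m A) != 0.
  by rewrite crossM mulf_neq0 // -unitfE -unitmxE.
have actA_pt a : actA A (line (a *: p + q)) = line (a *: (p *m A) + q *m A).
  by rewrite actA_line mulmxDl scalemxAl.
rewrite /gimage GammaE (imset_rel_graph (r' := gadj (p *m A) (q *m A)) (actA_inj uA)).
  rewrite /= GammaE (projlineD1E pq) (projlineD1E pqA) -imset_comp.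
  by congr rel_graph; apply: eq_imset => a; rewrite /= actA_pt.
by move=> _ _ /(ptP pq)[a ->] /(ptP pq)[b ->]; rewrite !actA_pt !gadj_pt.
Qed.

Section PaleyGraph.
Variables (F : finFieldType) (s : nat).
Hypothesis card_F : (#|F| = (4 * s).+1)%N.
Implicit Types (p q : 'rV[F]_2) (x y z : {set 'rV[F]_2}) (a b c d : F).

Let card_F_half : #|F| = s.*2.*2.+1.
Proof. by rewrite card_F -!mul2n mulnA. Qed.

Let s_gt0 : (0 < s)%N.
Proof. by have := finNzRing_gt1 F; rewrite card_F; case: s. Qed.

Let qcharMF := qcharM card_F_half.
Let qcharVF := qcharV card_F_half.

Lemma qcharN c : qchar (- c) = qchar c.
Proof. by rewrite -mulN1r qcharMF qchar_nzsq ?mul1r // (nzsqN1 card_F_half) ?odd_double. Qed.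

Lemma nzsqN c : nzsq (- c) = nzsq c.
Proof. by rewrite -!qchar_eq1 qcharN. Qed.

Lemma card_nzsq_pair_sq d : nzsq d -> #|[set c : F | nzsq c && nzsq (c - d)]| = s.-1.
Proof.
move=> sq_d; have := card_nzsq_pair card_F_half (nzsq_neq0 sq_d).
rewrite !qchar_nzsq ?nzsqN //; set N := #|_|; lia.
Qed.

Lemma card_nzsq_pair_nonsq d : d != 0 -> ~~ nzsq d ->
  #|[set c : F | nzsq c && nzsq (c - d)]| = s.
Proof.
move=> d0 nsq_d; have := card_nzsq_pair card_F_half d0.
rewrite !qchar_nonsq ?oppr_eq0 ?nzsqN //; set N := #|_|; lia.
Qed.

Section Basis.
Variables p q : 'rV[F]_2.
Hypothesis pq : cross p q != 0.
Local Notation pt a := (line (a *: p + q)).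
Local Notation Xp := (projline F :\ line p).

Lemma edge_Gamma_pt a b : edge (Gamma p q) (pt a) (pt b) = nzsq (a - b).
Proof.
rewrite GammaE edge_rel_graph !pt_in // !gadj_pt // -opprB nzsqN orbb /=.
by have [-> | ab] := eqVneq a b; rewrite ?subrr ?nzsq0 ?andbF // (inj_eq (pt_inj pq)) ab.
Qed.

Lemma nbr_Gamma_pt a : nbr (Gamma p q) (pt a) = [set pt b | b in [set b | nzsq (a - b)]].
Proof.
apply/setP => y; rewrite inE; apply/andP/imsetP => [[/(ptP pq)[b ->]] | [b]].
  by rewrite edge_Gamma_pt => sq_ab; exists b; rewrite ?inE.
by rewrite inE => sq_ab ->; rewrite edge_Gamma_pt sq_ab pt_in.
Qed.

Lemma card_nbr_Gamma_pt a : #|nbr (Gamma p q) (pt a)| = s.*2.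
Proof.
rewrite nbr_Gamma_pt card_imset; last exact: pt_inj.
have -> : [set b | nzsq (a - b)] = (fun b => a - b) @^-1: [set c : F | nzsq c].
  by apply/setP => b; rewrite !inE.
by rewrite card_preimset ?(card_nzsq card_F_half) //; apply: subrI.
Qed.

Lemma card_nbrI_Gamma_pt a b :
  #|nbr (Gamma p q) (pt a) :&: nbr (Gamma p q) (pt b)| =
  #|[set c : F | nzsq c && nzsq (c - (a - b))]|.
Proof.
rewrite !nbr_Gamma_pt -imsetI ?card_imset; last 2 first.
- exact: pt_inj.
- by move=> ? ? _ _; apply: pt_inj.
have -> : [set c | nzsq (a - c)] :&: [set c | nzsq (b - c)] =
    (fun c => a - c) @^-1: [set c : F | nzsq c && nzsq (c - (a - b))].
  by apply/setP => c; rewrite !inE; congr (_ && nzsq _); ring.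
by apply: card_preimset; apply: subrI.
Qed.

Lemma card_nbrI_Gamma_adj x y : x \in Xp -> y \in Xp -> edge (Gamma p q) x y ->
  #|nbr (Gamma p q) x :&: nbr (Gamma p q) y| = s.-1.
Proof.
move=> /(ptP pq)[a ->] /(ptP pq)[b ->].
by rewrite edge_Gamma_pt card_nbrI_Gamma_pt; apply: card_nzsq_pair_sq.
Qed.

Lemma card_nbrI_Gamma_nonadj x y : x \in Xp -> y \in Xp -> x != y ->
  ~~ edge (Gamma p q) x y -> #|nbr (Gamma p q) x :&: nbr (Gamma p q) y| = s.
Proof.
move=> /(ptP pq)[a ->] /(ptP pq)[b ->] xy.
rewrite edge_Gamma_pt card_nbrI_Gamma_pt; apply: card_nzsq_pair_nonsq.
by rewrite subr_eq0; apply: contraNneq xy => ->.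
Qed.

Lemma diameter_Gamma : diameter (Gamma p q) 2.
Proof.
apply: diameter2 => [x y xX yX xy nexy|].
  have /card_gt0P[z] : (0 < #|nbr (Gamma p q) x :&: nbr (Gamma p q) y|)%N.
    by rewrite card_nbrI_Gamma_nonadj.
  by rewrite !inE => /andP[/andP[_ exz] /andP[_ eyz]]; exists z; rewrite exz edgeC eyz.
have [d d0 nsq_d] := exists_nonsq card_F_half.
exists (pt 0), (pt d); rewrite !pt_in // edge_Gamma_pt sub0r nzsqN nsq_d.
by rewrite (inj_eq (pt_inj pq)) eq_sym d0.
Qed.

Lemma edge_Gamma_l x : edge (Gamma p q) (line p) x = false.
Proof. by rewrite GammaE edge_rel_graph !inE eqxx. Qed.

Lemma eps_Gamma_l x : eps (Gamma p q) (line p) x = 1.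
Proof. by rewrite /eps edge_Gamma_l. Qed.

Lemma eps_Gamma_pt a b : a != b -> eps (Gamma p q) (pt a) (pt b) = - qchar (a - b).
Proof.
rewrite -subr_eq0 => ab0; rewrite /eps edge_Gamma_pt.
by case: ifP => [/qchar_nzsq -> | /negbT/(qchar_nonsq ab0) ->]; rewrite ?opprK.
Qed.

Lemma loc_Ghat_l : induced (loc (Ghat p q) (line p)) Xp = Gamma p q.
Proof.
rewrite locE induced_rel_graph ?subD1set // GammaE.
apply: eq_rel_graph => _ _ /(ptP pq)[a ->] /(ptP pq)[b ->] ab.
rewrite eps_Ghat !eps_Gamma_l !mul1r gadj_pt // /eps edge_Gamma_pt.
by case: (nzsq (a - b)).
Qed.

Lemma loc_Ghat_r_isolated : isolated (loc (Ghat p q) (line q)) (line q).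
Proof.
apply: loc_isolated; have -> : line q = pt 0 by rewrite scale0r add0r.
by rewrite edge_Ghat edge_Gamma_pt subrr nzsq0.
Qed.

(* In the chart of (q, p), line (a *: q + p) is the point a^-1 of the chart of (p, q); the
   localization signs - qchar a and - qchar b turn - qchar (a^-1 - b^-1) into - qchar (b - a). *)
Lemma loc_Ghat_r : induced (loc (Ghat p q) (line q)) (projline F :\ line q) = Gamma q p.
Proof.
have qp : cross q p != 0 by rewrite crossC oppr_eq0.
have q_eq : line q = pt 0 by rewrite scale0r add0r.
have eps_r x : eps (Gamma p q) x (line p) = 1 by rewrite /eps edgeC edge_Gamma_l.
rewrite locE induced_rel_graph ?subD1set // (GammaE q p).
apply: eq_rel_graph => _ _ /(ptP qp)[a ->] /(ptP qp)[b ->] ne.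
have ab : a != b by apply: contraNneq ne => ->.
rewrite (gadj_pt qp) eps_Ghat q_eq -nzsqN opprB.
have eps_z c : c != 0 -> eps (Gamma p q) (pt 0) (line (c *: q + p)) = - qchar c.
  move=> c0; rewrite (line_swap p q c0) eps_Gamma_pt; last by rewrite eq_sym invr_neq0.
  by rewrite sub0r qcharN qcharVF.
have [a0 | a0] := eqVneq a 0.
  subst a; have b0 : b != 0 by rewrite eq_sym.
  rewrite [0 *: q]scale0r add0r eps_r mul1r eps_Gamma_l mulr1 eps_z //.
  by rewrite subr0 eqr_opp qchar_eq1.
have [b0 | b0] := eqVneq b 0.
  subst b; rewrite [0 *: q]scale0r add0r !eps_r !mulr1 eps_z //.
  by rewrite sub0r nzsqN eqr_opp qchar_eq1.
rewrite !eps_z // (line_swap p q a0) (line_swap p q b0) eps_Gamma_pt; last first.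
  by rewrite (inj_eq (@invr_inj _)).
have -> : a^-1 - b^-1 = (b - a) * a^-1 * b^-1 by field; rewrite a0 b0.
rewrite !qcharMF !qcharVF -qchar_eq1.
have ba0 : b - a != 0 by rewrite subr_eq0 eq_sym.
by case: (qchar_sign a0) => ->; case: (qchar_sign b0) => ->; case: (qchar_sign ba0) => ->.
Qed.

(* With p' = la p and q' = mu p + nu q, the chart point a of (p', q') is the chart point
   (a la + mu) / nu of (p, q): differences get multiplied by la / nu, whose square class is
   that of la nu = cross p' q' / cross p q. *)
Lemma Gamma_rebase p' q' : cross p' q' != 0 -> line p' = line p ->
  Gamma p' q' = if nzsq (cross p' q' / cross p q) then Gamma p q else complement (Gamma p q).
Proof.
move=> pq' pp'; have [la la0 p'_eq] := eq_line_scale (basis_neq0l pq') (esym pp').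
set mu := cross q' q / cross p q; set nu := cross p q' / cross p q.
have q'_eq : q' = mu *: p + nu *: q := cross_decomp q' pq.
have cross_eq : cross p' q' = la * nu * cross p q.
  by rewrite p'_eq q'_eq -[la *: p]addr0 -(scale0r q) cross_comb mul0r subr0.
have nu0 : nu != 0 by apply: contraNneq pq' => nu0; rewrite cross_eq nu0 mulr0 mul0r.
have pt'_eq a : line (a *: p' + q') = pt ((a * la + mu) / nu).
  rewrite -(lineZ (a *: p' + q') (invr_neq0 nu0)); congr line.
  by apply/rowP => k; rewrite p'_eq q'_eq !mxE; field.
have sq_diff a b : a != b ->
    nzsq ((a * la + mu) / nu - (b * la + mu) / nu) = (nzsq (a - b) == nzsq (la * nu)).
  rewrite -subr_eq0 => ab0.
  have -> : (a * la + mu) / nu - (b * la + mu) / nu = (a - b) * (la * nu) * nu^-1 ^+ 2.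
    by field.
  rewrite -qchar_eq1 qcharMF qchar_sqr ?invr_neq0 // mulr1 qchar_eq1.
  by rewrite (nzsqM card_F_half) // mulf_neq0.
rewrite cross_eq mulfK // GammaE complementE pp'.
case: ifP => sq_lanu; apply: eq_rel_graph => x y; rewrite -pp'.
all: move=> /(ptP pq')[a ->] /(ptP pq')[b ->] ne.
all: have ab : a != b by apply: contraNneq ne => ->.
all: rewrite gadj_pt // !pt'_eq ?gadj_pt ?edge_Gamma_pt // sq_diff // sq_lanu.
all: by case: (nzsq (a - b)).
Qed.

Lemma Gamma_act_stab (A : 'M[F]_2) : A \in unitmx -> actA A (line p) = line p ->
  Gamma (p *m A) (q *m A) =
    if [exists g : F, \det A == g ^+ 2] then Gamma p q else complement (Gamma p q).
Proof.
move=> uA stab; have detA0 : \det A != 0 by rewrite -unitfE -unitmxE.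
have pqA : cross (p *m A) (q *m A) != 0 by rewrite crossM mulf_neq0.
by rewrite Gamma_rebase -?actA_line // crossM mulrC mulKf // /nzsq detA0.
Qed.

Lemma Gamma_neq_complement : Gamma p q != complement (Gamma p q).
Proof.
apply/eqP => e; have := edge_Gamma_pt 1 0; rewrite {1}e complementE edge_rel_graph.
by rewrite !edge_Gamma_pt !subr0 sub0r nzsqN nzsq1 !andbF.
Qed.

End Basis.

Definition Gamma_class (b : bool) : {set graph {set 'rV[F]_2}} :=
  [set Gamma r.1 r.2 | r in [set r : 'rV[F]_2 * 'rV[F]_2 |
                               (cross r.1 r.2 != 0) && (nzsq (cross r.1 r.2) == b)]].

Lemma Gamma_eq_class p q p' q' : cross p q != 0 -> cross p' q' != 0 ->
  line p' = line p -> nzsq (cross p' q') = nzsq (cross p q) -> Gamma p' q' = Gamma p q.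
Proof.
move=> pq pq' pp' sq; rewrite (Gamma_rebase pq pq' pp').
by rewrite (nzsqM card_F_half) ?invr_neq0 // (nzsqV card_F_half) sq eqxx.
Qed.

Lemma orbitSL_Gamma p q : cross p q != 0 -> orbitSL (Gamma p q) = Gamma_class (nzsq (cross p q)).
Proof.
move=> pq; apply/setP => H; apply/imsetP/imsetP => [[A] | [[p' q']]].
  rewrite inE => /eqP detA ->; exists (p *m A, q *m A).
    by rewrite inE /= crossM detA mulr1 pq eqxx.
  by apply: gimage_Gamma; rewrite // unitmxE detA unitr1.
rewrite inE /= => /andP[pq' /eqP sq] ->.
set c := cross p q / cross p' q'; have c0 : c != 0 by rewrite mulf_neq0 ?invr_neq0.
have pqc : cross p' (c *: q') = cross p q by rewrite crossZr mulfVK.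
(* Rescaling q' by c makes the determinant of A equal to 1. *)
set A := invmx (col_mx p q) *m col_mx p' (c *: q').
have [pA qA] : p *m A = p' /\ q *m A = c *: q'.
  by apply: eq_col_mx; rewrite -mul_col_mx mulKVmx // unitmxE unitfE det_col_mx2.
have detA : \det A = 1.
  by apply: (mulfI pq); rewrite mulr1 -crossM pA qA pqc.
exists A; first by rewrite inE detA.
rewrite gimage_Gamma ?unitmxE ?detA ?unitr1 // pA qA.
by apply: Gamma_eq_class; rewrite // pqc.
Qed.

Lemma exists_basis_class p q (b : bool) : cross p q != 0 ->
  exists2 r : 'rV[F]_2 * 'rV[F]_2, cross r.1 r.2 != 0 & nzsq (cross r.1 r.2) = b.
Proof.
move=> pq; have [<- | ne_b] := eqVneq (nzsq (cross p q)) b; first by exists (p, q).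
have [d d0 nsq_d] := exists_nonsq card_F_half.
have pqd : cross (d *: p) q != 0 by rewrite crossZl mulf_neq0.
exists (d *: p, q) => //=; move: ne_b; rewrite crossZl (nzsqM card_F_half) // (negPf nsq_d).
by case: b; case: (nzsq _).
Qed.

Lemma Gamma_class_neq p q : cross p q != 0 -> Gamma_class true != Gamma_class false.
Proof.
move=> pq; apply/eqP => eq_class; have [[p1 q1] /= pq1 sq1] := exists_basis_class true pq.
have : Gamma p1 q1 \in Gamma_class false.
  by rewrite -eq_class; apply/imsetP; exists (p1, q1); rewrite // inE pq1 sq1.
case/imsetP => -[p2 q2]; rewrite inE /= => /andP[pq2 /eqP sq2] eqG.
have p21 : line p2 = line p1.
  apply/eqP; apply: contraT => ne; have /= := congr1 fst eqG.
  by move/setP/(_ (line p2)); rewrite !inE ne eqxx (line_projline_l pq2).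
rewrite (Gamma_rebase pq1 pq2 p21) (nzsqM card_F_half) ?invr_neq0 // (nzsqV card_F_half) in eqG.
by move: eqG; rewrite sq1 sq2 /= => /eqP; apply/negP; apply: Gamma_neq_complement.
Qed.

Lemma card_orbitSL_Gammas p q : cross p q != 0 -> #|[set orbitSL H | H in Gammas F]| = 2%N.
Proof.
move=> pq; have -> : [set orbitSL H | H in Gammas F] = [set Gamma_class true; Gamma_class false].
  apply/setP => X; apply/imsetP/set2P => [[G /imsetP[r] ] | X_class].
    by rewrite inE is_basisE => pqr -> ->; rewrite orbitSL_Gamma //; case: (nzsq _); [left | right].
  have [b ->] : exists b : bool, X = Gamma_class b by case: X_class => ->; eexists.
  have [r pqr sqr] := exists_basis_class b pq.
  exists (Gamma r.1 r.2); first by apply/imsetP; exists r; rewrite ?inE ?is_basisE.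
  by rewrite orbitSL_Gamma // sqr.
by rewrite cards2 (Gamma_class_neq pq).
Qed.

Lemma loc_Ghat_Gamma p q z : cross p q != 0 -> z \in projline F ->
  exists2 r : 'rV[F]_2 * 'rV[F]_2,
    [/\ cross r.1 r.2 != 0, line r.1 = z & nzsq (cross r.1 r.2) = nzsq (cross p q)] &
    induced (loc (Ghat p q) z) (projline F :\ z) = Gamma r.1 r.2.
Proof.
move=> pq zX; have [-> | zp] := eqVneq z (line p); first by exists (p, q); rewrite ?loc_Ghat_l.
have [a ->] : exists a, z = line (a *: p + q) by apply: (ptP pq); rewrite !inE zp.
set q' := a *: p + q; have pq' : cross p q' != 0 by rewrite cross_addZr.
have -> : Ghat p q = Ghat p q' by rewrite /Ghat (Gamma_eq_class pq pq') ?cross_addZr.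
exists (q', p); last exact: loc_Ghat_r.
by rewrite /= crossC oppr_eq0 pq' nzsqN cross_addZr.
Qed.

Lemma orbitSL_Gamma_loc p q : cross p q != 0 ->
  orbitSL (Gamma p q) = [set induced (loc (Ghat p q) z) (projline F :\ z) | z in projline F].
Proof.
move=> pq; rewrite orbitSL_Gamma //; apply/setP => H; apply/imsetP/imsetP => -[r].
  rewrite inE => /andP[pqr /eqP sqr] ->.
  exists (line r.1); first exact: line_projline_l pqr.
  have [r' [pqr' r'r sqr'] ->] := loc_Ghat_Gamma pq (line_projline_l pqr).
  by rewrite (Gamma_eq_class pqr' pqr) ?sqr ?sqr'.
move=> zX ->; have [r' [pqr' _ sqr'] ->] := loc_Ghat_Gamma pq zX.
by exists r'; rewrite // inE pqr' sqr' eqxx.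
Qed.

End PaleyGraph.

Theorem theorem4 (t : nat) (F : finFieldType) (hq : #|F| = (4 * t + 5)%N)
    (u v : 'rV[F]_2) (huv : is_basis u v) :
  let s := t.+1 in
  let G := Gamma u v in
  [/\
   (* 1 *)
   [/\ diameter G 2,
       (forall x, x \in G.1 ->
          #|nbr G x| = (#|F|.-1)./2 /\ #|nbr G x| = (2 * s)%N),
       (forall x y, x \in G.1 -> y \in G.1 -> edge G x y ->
          #|nbr G x :&: nbr G y| = t) &
       (forall x y, x \in G.1 -> y \in G.1 -> is_dist G x y 2 ->
          #|nbr G x :&: nbr G y| = s)],
   (* 2 *)
   isolated (loc (Ghat u v) (line v)) (line v) /\
   induced (loc (Ghat u v) (line v)) (projline F :\ line v) = Gamma v u,
   (* 3a *)
   (forall A : 'M[F]_2, A \in unitmx -> gimage A G = Gamma (u *m A) (v *m A)),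
   (* 3b *)
   (forall A : 'M[F]_2, A \in unitmx -> actA A (line u) = line u ->
      Gamma (u *m A) (v *m A) =
        if [exists g : F, \det A == g ^+ 2] then G else complement G) &
   (* 4 *)
   #|[set orbitSL H | H in Gammas F]| = 2%N /\
   orbitSL G = [set induced (loc (Ghat u v) z) (projline F :\ z) | z in projline F]].
Proof.
move=> s G; rewrite {}/G; have uv : cross u v != 0 by rewrite -is_basisE.
have card_F : #|F| = ((4 * s).+1)%N by rewrite hq; lia.
split.
- split.
  + exact: (diameter_Gamma card_F uv).
  + move=> _ /(ptP uv)[a ->]; rewrite (card_nbr_Gamma_pt card_F uv) card_F mul2n.
    by split; rewrite // -[(4 * s)%N]/(2 * 2 * s)%N -mulnA [(2 * s)%N]mul2n mul2n half_double.
  + exact: (card_nbrI_Gamma_adj card_F uv).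
  + by move=> x y xX yX /is_dist2_nonadj[]; apply: (card_nbrI_Gamma_nonadj card_F uv).
- split; [exact: (loc_Ghat_r_isolated card_F uv) | exact: (loc_Ghat_r card_F uv)].
- by move=> A; apply: gimage_Gamma.
- exact: (Gamma_act_stab card_F uv).
- split; [exact: (card_orbitSL_Gammas card_F uv) | exact: (orbitSL_Gamma_loc card_F uv)].
Qed.
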